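(* For $\theta\in[0,\pi/2]$ let $C_\theta=\cos\theta\,(|\uparrow\rangle\langle\uparrow|+|\downarrow\rangle\langle\downarrow|)+\sin\theta\,(|\uparrow\rangle\langle\downarrow|-|\downarrow\rangle\langle\uparrow|)$ and $\gamma_*=\tfrac{1}{\sqrt2}(|\uparrow\rangle+i|\downarrow\rangle)$. Then: (i) for every $\theta\in[0,\pi/2]$ the coin setup $(C_\theta,\gamma_* )$ is symmetric in distribution; (ii) every coin setup $(C,\gamma)$ (with $C\in U(2)$ arbitrary and $\gamma\in\mathbb{C}^2$ a unit vector) that is symmetric in distribution is distributionally equivalent to $(C_\theta,\gamma_* )$ for some $\theta\in[0,\pi/2]$; (iii) if $\theta,\theta'\in[0,\pi/2]$ and $(C_\theta,\gamma_* )\sim_d(C_{\theta'},\gamma_* )$, then $\theta=\theta'$. In other words, $\theta\mapsto(C_\theta,\gamma_* )$ induces a bijection between $[0,\pi/2]$ and the distributional equivalence classes of coin setups that are symmetric in distribution.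
   Context: Let $\mathcal{H}=\ell^2(\mathbb{Z})\otimes\mathbb{C}^2$, with position basis $\{|j\rangle: j\in\mathbb{Z}\}$ of $\ell^2(\mathbb{Z})$ and orthonormal basis $\{|\uparrow\rangle,|\downarrow\rangle\}$ of $\mathbb{C}^2$. A (quantum) coin is any $C\in U(2)$. The conditional translation is $T=\sum_{j\in\mathbb{Z}}|j+1\rangle\langle j|\otimes|\uparrow\rangle\langle\uparrow|+\sum_{j\in\mathbb{Z}}|j-1\rangle\langle j|\otimes|\downarrow\rangle\langle\downarrow|$ and the walk operator is $W(C)=T(\mathbb{1}\otimes C)$. A coin setup is a pair $(C,\gamma)$ with $C\in U(2)$ and $\gamma\in\mathbb{C}^2$ a unit vector (the initial coin state). Its induced distributions are $p_{(C,\gamma)}(j,n)=\langle\psi_n|(|j\rangle\langle j|\otimes\mathbb{1})|\psi_n\rangle$ with $\psi_n=W(C)^n(|0\rangle\otimes\gamma)$, for $j\in\mathbb{Z}$, $n\in\mathbb{N}$. A coin setup is called symmetric in distribution if $p_{(C,\gamma)}(j,n)=p_{(C,\gamma)}(-j,n)$ for all $j\in\mathbb{Z}$ and all $n\in\mathbb{N}$. Two coin setups $\mathcal{C}_1,\mathcal{C}_2$ are distributionally equivalent, written $\mathcal{C}_1\sim_d\mathcal{C}_2$, if $p_{\mathcal{C}_1}(j,n)=p_{\mathcal{C}_2}(j,n)$ for all $j\in\mathbb{Z}$, $n\in\mathbb{N}$. *)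

From HB Require Import structures.
From mathcomp Require Import all_boot all_order all_algebra.
From mathcomp Require Import complex.
From mathcomp Require Import Rstruct.
From Stdlib Require Import Reals.
Set Implicit Arguments. Unset Strict Implicit. Unset Printing Implicit Defensive.
Import Order.TTheory GRing.Theory Num.Theory.
Local Open Scope ring_scope.
Local Open Scope complex_scope.

Notation Cx := (Rdefinitions.R[i]).

Definition sqmod (z : Cx) : Rdefinitions.R := (complex.Re z) ^+ 2 + (complex.Im z) ^+ 2.

Definition up : 'I_2 := ord0.
Definition down : 'I_2 := ord_max.

Definition coin := 'M[Cx]_2.
Definition adjoint (C : coin) : coin := (map_mx (@conjc _) C)^T.
Definition unitary (C : coin) : Prop := C *m adjoint C = 1%:M.

Definition cstate := 'cV[Cx]_2.
Definition unit_vec (g : cstate) : Prop := sqmod (g up 0) + sqmod (g down 0) = 1.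

(* Vectors of H = l^2(Z) (x) C^2, written as functions Z -> C^2
   (all states occurring below are finitely supported). *)
Definition hstate := int -> cstate.

(* Walk operator W(C) = T (1 (x) C):
   (W psi)(j) has up-component  (C psi(j-1))_up   (up moves j-1 -> j)
              and down-component (C psi(j+1))_down (down moves j+1 -> j). *)
Definition walk (C : coin) (psi : hstate) : hstate :=
  fun j => \col_(k < 2)
    (if k == up then (C *m psi (j - 1)) up 0 else (C *m psi (j + 1)) down 0).

Definition init (g : cstate) : hstate := fun j => if j == 0 then g else 0.

Definition psi (C : coin) (g : cstate) (n : nat) : hstate := iter n (walk C) (init g).

(* p_(C,gamma)(j,n) = <psi_n | (|j><j| (x) 1) | psi_n>. *)
Definition prob (C : coin) (g : cstate) (j : int) (n : nat) : Rdefinitions.R :=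
  sqmod (psi C g n j up 0) + sqmod (psi C g n j down 0).

Definition symmetric_in_distribution (C : coin) (g : cstate) : Prop :=
  forall (j : int) (n : nat), prob C g j n = prob C g (- j) n.

Definition dist_equiv (C1 : coin) (g1 : cstate) (C2 : coin) (g2 : cstate) : Prop :=
  forall (j : int) (n : nat), prob C1 g1 j n = prob C2 g2 j n.

Definition Ctheta (th : Rdefinitions.R) : coin :=
  \matrix_(a < 2, b < 2)
    (if a == b then (cos th)%:C
     else if a == up then (sin th)%:C else (- sin th)%:C).

Definition gamma_star : cstate :=
  \col_(k < 2) (if k == up then (Rinv (sqrt 2))%:C else Complex 0 (Rinv (sqrt 2))).

From Pilot Require Import Defs.
From HB Require Import structures.
From mathcomp Require Import all_boot all_order all_algebra.
From mathcomp Require Import complex.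
From mathcomp Require Import Rstruct.
From Stdlib Require Import Reals.
From mathcomp Require Import ring.
From Stdlib Require Import Lra.
Set Implicit Arguments. Unset Strict Implicit. Unset Printing Implicit Defensive.
Import Order.TTheory GRing.Theory Num.Theory.
Local Open Scope ring_scope.
Local Open Scope complex_scope.

(* Three symmetries of the walk carry the proof.  Rescaling the rows and columns of the coin by
   unimodular numbers [d1 k], [d2 l] (and the initial state by [d2^-1]) multiplies [psi_n(j)] by
   a phase [s^n t^j], so it does not change the distribution; up to such a gauge every unitary
   coin is some [C_theta], [theta] in [[0, pi/2]].  For a real coin, conjugating the initial
   state conjugates every amplitude.  For a coin [[a, b], [-b, a]], the initial state
   [(y, -x)] produces the mirror image of the walk started in [(x, y)]; as [i gamma_*] is the
   mirror state of [gamma_*], the coin [C_theta] with initial state [gamma_*] is symmetric.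
   Conversely, symmetry at the sites [1] and [-1] after one and three steps forces
   [|x| = |y|] and, unless [C_theta] is diagonal or antidiagonal, [y = i x] or [y = -i x];
   after a conjugation and a gauge transformation such a state becomes [gamma_*].
   Finally [p(2, 2) = cos^2 theta / 2] recovers [theta]. *)

Local Notation Up := Defs.up.
Local Notation Down := Defs.down.

Lemma ord2P (k : 'I_2) : k = Up \/ k = Down.
Proof. by case: k => [[|[|//]]] p; [left|right]; apply: val_inj. Qed.

(* Unfolding [sqmod] or [prob] with [rewrite /_] lets simplification turn the ring operations
   of [R] into [Rplus] and [Rmult]; these equations unfold them safely. *)
Lemma sqmodE z : sqmod z = complex.Re z ^+ 2 + complex.Im z ^+ 2.
Proof. by []. Qed.

Lemma sqmod_ge0 z : 0 <= sqmod z.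
Proof. by rewrite addr_ge0 // sqr_ge0. Qed.

Lemma sqmod_eq0 z : (sqmod z == 0) = (z == 0).
Proof.
case: z => a b; rewrite !sqmodE /= paddr_eq0 ?sqr_ge0 // !sqrf_eq0.
by rewrite eq_complex.
Qed.

Lemma sqmodC (r : R) : sqmod r%:C = r ^+ 2.
Proof. by rewrite sqmodE [complex.Re _]/= [complex.Im _]/= [0 ^+ 2]expr2 mulr0 addr0. Qed.

Lemma sqmod0 : sqmod 0 = 0.
Proof. by rewrite (sqmodC 0) expr0n. Qed.

Lemma sqmod1 : sqmod 1 = 1.
Proof. by rewrite (sqmodC 1) expr1n. Qed.

Lemma sqmodi : sqmod 'i = 1.
Proof. by rewrite sqmodE [complex.Re _]/= [complex.Im _]/= [0 ^+ 2]expr2 mulr0 add0r expr1n. Qed.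

Lemma sqmodN z : sqmod (- z) = sqmod z.
Proof. by case: z => a b; rewrite !sqmodE /= !sqrrN. Qed.

Lemma sqmodJ z : sqmod (conjc z) = sqmod z.
Proof. by case: z => a b; rewrite !sqmodE /= sqrrN. Qed.

Lemma sqmodM (z w : Cx) : sqmod (z * w) = sqmod z * sqmod w.
Proof. by case: z => a b; case: w => c d; rewrite !sqmodE /=; ring. Qed.

Lemma sqmodX z n : sqmod (z ^+ n) = sqmod z ^+ n.
Proof. by elim: n => [|n IH]; rewrite ?sqmod1 // !exprS sqmodM IH. Qed.

Lemma sqmodV z : sqmod z^-1 = (sqmod z)^-1.
Proof.
have [->|nz] := eqVneq z 0; first by rewrite invr0 sqmod0 invr0.
apply: (@mulfI _ (sqmod z)); first by rewrite sqmod_eq0.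
by rewrite -sqmodM !mulfV ?sqmod1 // sqmod_eq0.
Qed.

Lemma sqmodXz_eq1 z (j : int) : sqmod z = 1 -> sqmod (z ^ j) = 1.
Proof.
move=> z1; case: j => n; first by rewrite /= sqmodX z1 expr1n.
by rewrite NegzE -invr_expz sqmodV sqmodX z1 expr1n invr1.
Qed.

Lemma sqmod_sqr_eq1 z : sqmod (z ^+ 2) = 1 -> sqmod z = 1.
Proof. by rewrite sqmodX => z2; apply/eqP; rewrite -(pexpr_eq1 (n := 2)) ?z2 ?sqmod_ge0. Qed.

Lemma conjcD (z w : Cx) : conjc (z + w) = conjc z + conjc w. Proof. exact: rmorphD. Qed.
Lemma conjcM (z w : Cx) : conjc (z * w) = conjc z * conjc w. Proof. exact: rmorphM. Qed.
Lemma conjcN (z : Cx) : conjc (- z) = - conjc z. Proof. exact: rmorphN. Qed.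

Lemma mulcJ z : z * conjc z = (sqmod z)%:C.
Proof. by case: z => a b; rewrite !sqmodE /=; congr Complex; ring. Qed.

Lemma mulJc z : conjc z * z = (sqmod z)%:C.
Proof. by rewrite mulrC mulcJ. Qed.

Lemma ReD (z w : Cx) : complex.Re (z + w) = complex.Re z + complex.Re w.
Proof. by case: z; case: w. Qed.

Lemma ImD (z w : Cx) : complex.Im (z + w) = complex.Im z + complex.Im w.
Proof. by case: z; case: w. Qed.

Lemma ReN (z : Cx) : complex.Re (- z) = - complex.Re z. Proof. by case: z. Qed.
Lemma ImN (z : Cx) : complex.Im (- z) = - complex.Im z. Proof. by case: z. Qed.

Lemma Re_realM (r : R) (z : Cx) : complex.Re (r%:C * z) = r * complex.Re z.
Proof. by case: z => a b /=; rewrite mul0r subr0. Qed.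

Lemma Im_realM (r : R) (z : Cx) : complex.Im (r%:C * z) = r * complex.Im z.
Proof. by case: z => a b /=; rewrite mul0r addr0. Qed.

Lemma Complex_ReIm (z : Cx) : z = Complex (complex.Re z) (complex.Im z).
Proof. by case: z. Qed.

Lemma mulic (a b : R) : 'i * Complex a b = Complex (- b) a.
Proof. by simpc; congr Complex. Qed.

Lemma mulii : 'i * 'i = -1 :> Cx.
Proof. by rewrite -expr2 sqr_i. Qed.

Lemma mulJc_unimodular z : sqmod z = 1 -> conjc z * z = 1.
Proof. by move=> z1; rewrite mulJc z1. Qed.

Lemma real_complex_eq0 (r : R) : (r%:C == 0) = (r == 0).
Proof. by rewrite eq_complex /= eqxx andbT. Qed.

Lemma Rsqrt_ge0 (x : R) : 0 <= sqrt x.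
Proof. by apply/RleP; apply: sqrt_pos. Qed.

Lemma sqrt_expr2 (x : R) : 0 <= x -> sqrt x ^+ 2 = x.
Proof. by move/RleP => x_ge0; rewrite expr2; apply: sqrt_sqrt. Qed.

(* The phase of [0] is chosen to be [1], so that it is always unimodular. *)
Definition phase (z : Cx) : Cx := if z == 0 then 1 else z / (sqrt (sqmod z))%:C.

Lemma polar_phase z : z = (sqrt (sqmod z))%:C * phase z.
Proof.
rewrite /phase; case: eqP => [->|/eqP z_neq0]; first by rewrite sqmod0 sqrt_0 mul0r.
have r_neq0 : (sqrt (sqmod z))%:C != 0.
  apply: contra z_neq0 => /eqP/complexI r0.
  by rewrite -sqmod_eq0 -(sqrt_expr2 (sqmod_ge0 z)) r0 expr0n.
by rewrite mulrC -mulrA mulVf ?mulr1.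
Qed.

Lemma sqmod_phase z : sqmod (phase z) = 1.
Proof.
rewrite /phase; case: eqP => [_|/eqP z_neq0]; first exact: sqmod1.
by rewrite sqmodM sqmodV sqmodC sqrt_expr2 ?sqmod_ge0 // mulfV // sqmod_eq0.
Qed.

Lemma sqrt2_invC : (sqrt 2)%:C * (Rinv (sqrt 2))%:C = 1.
Proof.
have sqrt2_inv : sqrt 2 * Rinv (sqrt 2) = 1 := Rinv_r _ sqrt2_neq_0.
by rewrite -rmorphM sqrt2_inv.
Qed.

Lemma sqmod_sqrt2M z : sqmod ((sqrt 2)%:C * z) = sqmod z + sqmod z.
Proof.
rewrite sqmodM sqmodC sqrt_expr2; first by rewrite mulrDl mul1r.
by apply/RleP/Rlt_le/Rlt_0_2.
Qed.

Lemma sqr_add_sqr_eq0 (a b : R) : a ^+ 2 + b ^+ 2 = 0 -> a = 0 /\ b = 0.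
Proof. by move/eqP; rewrite paddr_eq0 ?sqr_ge0 // !sqrf_eq0 => /andP[/eqP -> /eqP ->]. Qed.

Lemma cos2_sin2 th : cos th ^+ 2 + sin th ^+ 2 = 1.
Proof. by rewrite addrC; apply: sin2_cos2. Qed.

Lemma exists_angle_cos_sin (a b : R) : 0 <= a -> 0 <= b -> a ^+ 2 + b ^+ 2 = 1 ->
  exists th, [/\ (0 <= th <= PI / 2)%R, cos th = a & sin th = b].
Proof.
move=> a_ge0 b_ge0 ab1.
have a_le1 : a <= 1 by rewrite -(expr_le1 (n := 2)) // -ab1 lerDl sqr_ge0.
have a_range : (-1 <= a <= 1)%R.
  have a0 : (0 <= a)%R by apply/RleP.
  have a1 : (a <= 1)%R by apply/RleP.
  lra.
have cos_acos_a : cos (acos a) = a by apply: cos_acos.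
exists (acos a); split => //.
- have [acos_ge0 acos_lePI] := acos_bound a; split => //.
  case: (Rle_or_lt (acos a) (PI / 2)) => // acos_gt.
  have : (cos (acos a) < 0)%R by apply: cos_lt_0 => //; have := PI_RGT_0; lra.
  by rewrite cos_acos_a => /RltP; rewrite ltNge a_ge0.
- rewrite sin_acos // (_ : (1 - Rsqr a)%R = (b * b)%R); last first.
    by have ab1' : (a * a + b * b = 1)%R := ab1; rewrite /Rsqr; lra.
  by move/RleP: b_ge0 => b_ge0; apply: sqrt_square.
Qed.

Lemma mulmx2E n (A : coin) (B : 'M[Cx]_(2, n)) k l :
  (A *m B) k l = A k Up * B Up l + A k Down * B Down l.
Proof. by rewrite mxE big_ord_recl big_ord1 (_ : lift ord0 ord0 = Down) //; apply/val_inj. Qed.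

Lemma probE C g j n : prob C g j n = sqmod (psi C g n j Up 0) + sqmod (psi C g n j Down 0).
Proof. by []. Qed.

Lemma psi0E C g j k : psi C g 0 j k 0 = if j == 0 then g k 0 else 0.
Proof. by rewrite /psi /= /init; case: ifP; rewrite ?mxE. Qed.

Lemma psiS_up C g n j : psi C g n.+1 j Up 0 =
  C Up Up * psi C g n (j - 1) Up 0 + C Up Down * psi C g n (j - 1) Down 0.
Proof. by rewrite /psi iterS /walk mxE eqxx mulmx2E. Qed.

Lemma psiS_down C g n j : psi C g n.+1 j Down 0 =
  C Down Up * psi C g n (j + 1) Up 0 + C Down Down * psi C g n (j + 1) Down 0.
Proof. by rewrite /psi iterS /walk mxE /= mulmx2E. Qed.

(* The two components of [prob] are unrolled separately: unrolling them together makes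
   [rewrite] compare amplitudes at different times up to conversion, which is very slow. *)
Section SmallTimeAmplitudes.

Variables (C : coin) (g : cstate).

Let u1 := C Up Up * g Up 0 + C Up Down * g Down 0.
Let u2 := C Down Up * g Up 0 + C Down Down * g Down 0.

Local Ltac unroll := by rewrite !(psiS_up, psiS_down) !psi0E /= ?(mulr0, addr0, add0r).

Lemma psi_1_1_up : psi C g 1 1 Up 0 = u1. Proof. unroll. Qed.
Lemma psi_1_1_down : psi C g 1 1 Down 0 = 0. Proof. unroll. Qed.
Lemma psi_1_N1_up : psi C g 1 (-1) Up 0 = 0. Proof. unroll. Qed.
Lemma psi_1_N1_down : psi C g 1 (-1) Down 0 = u2. Proof. unroll. Qed.
Lemma psi_2_2_up : psi C g 2 2 Up 0 = C Up Up * u1. Proof. unroll. Qed.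
Lemma psi_2_2_down : psi C g 2 2 Down 0 = 0. Proof. unroll. Qed.

Lemma psi_3_1_up :
  psi C g 3 1 Up 0 = C Up Up * (C Up Down * u2) + C Up Down * (C Down Up * u1).
Proof. unroll. Qed.

Lemma psi_3_1_down : psi C g 3 1 Down 0 = C Down Up * (C Up Up * u1).
Proof. unroll. Qed.

Lemma psi_3_N1_up : psi C g 3 (-1) Up 0 = C Up Down * (C Down Down * u2).
Proof. unroll. Qed.

Lemma psi_3_N1_down :
  psi C g 3 (-1) Down 0 = C Down Up * (C Up Down * u2) + C Down Down * (C Down Up * u1).
Proof. unroll. Qed.

End SmallTimeAmplitudes.

(** * Invariances of the distribution *)

Section Gauge.

Variables (C C' : coin) (g g' : cstate) (d1 d2 : 'I_2 -> Cx).
Hypotheses (d1_unimodular : forall k, sqmod (d1 k) = 1)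
  (d2_unimodular : forall k, sqmod (d2 k) = 1).
Hypothesis gauge_coin : forall k l, C' k l = d1 k * C k l * d2 l.
Hypothesis gauge_state : forall k, d2 k * g' k 0 = g k 0.

(* A step up multiplies the [d2]-rescaled amplitudes by [p], a step down by [q];
   writing [p = s t] and [q = s / t], after [n] steps the amplitude at [j] has
   picked up the phase [s ^+ n * t ^ j]. *)
Let p := d2 Up * d1 Up.
Let q := d2 Down * d1 Down.
Let t := sqrtc (p / q).
Let s := q * t.

Let sqmod_p : sqmod p = 1. Proof. by rewrite sqmodM d1_unimodular d2_unimodular mulr1. Qed.
Let sqmod_q : sqmod q = 1. Proof. by rewrite sqmodM d1_unimodular d2_unimodular mulr1. Qed.
Let q_neq0 : q != 0. Proof. by rewrite -sqmod_eq0 sqmod_q oner_eq0. Qed.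

Let sqmod_t : sqmod t = 1.
Proof.
by apply: sqmod_sqr_eq1; rewrite sqr_sqrtc sqmodM sqmodV sqmod_p sqmod_q invr1 mulr1.
Qed.

Let t_neq0 : t != 0. Proof. by rewrite -sqmod_eq0 sqmod_t oner_eq0. Qed.
Let sqmod_s : sqmod s = 1. Proof. by rewrite sqmodM sqmod_q sqmod_t mulr1. Qed.

Let mul_s_t : s * t = p.
Proof. by rewrite -mulrA -expr2 sqr_sqrtc mulrCA mulfV ?mulr1. Qed.

Let gauge_psi n j k : d2 k * psi C' g' n j k 0 = s ^+ n * t ^ j * psi C g n j k 0.
Proof.
elim: n j k => [|n IH] j k.
  rewrite !psi0E; case: eqP => [->|_]; last by rewrite !mulr0.
  by rewrite expr0 expr0z !mul1r gauge_state.
have [->|->] := ord2P k.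
- have phase_up : s ^+ n.+1 * t ^ j = p * (s ^+ n * t ^ (j - 1)).
    by rewrite -mul_s_t exprS -{1}(subrK 1 j) expfzDr // expr1z; ring.
  rewrite !psiS_up !gauge_coin phase_up.
  transitivity (p * (C Up Up * (d2 Up * psi C' g' n (j - 1) Up 0)
                     + C Up Down * (d2 Down * psi C' g' n (j - 1) Down 0))).
    by rewrite /p; ring.
  by rewrite !IH; ring.
- have phase_down : s ^+ n.+1 * t ^ j = q * (s ^+ n * t ^ (j + 1)).
    by rewrite expfzDr // expr1z /s exprS; ring.
  rewrite !psiS_down !gauge_coin phase_down.
  transitivity (q * (C Down Up * (d2 Up * psi C' g' n (j + 1) Up 0)
                     + C Down Down * (d2 Down * psi C' g' n (j + 1) Down 0))).
    by rewrite /q; ring.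
  by rewrite !IH; ring.
Qed.

Lemma gauge_prob j n : prob C' g' j n = prob C g j n.
Proof.
have amplitude k : sqmod (psi C' g' n j k 0) = sqmod (psi C g n j k 0).
  have := congr1 sqmod (gauge_psi n j k).
  by rewrite !sqmodM d2_unimodular sqmodX sqmod_s sqmodXz_eq1 // expr1n !mul1r.
by rewrite !probE !amplitude.
Qed.

End Gauge.

Section RealCoin.

Variables (C : coin) (g g' : cstate).
Hypothesis C_real : forall k l, conjc (C k l) = C k l.
Hypothesis g'_conj : forall k, g' k 0 = conjc (g k 0).

Lemma psi_conj n j k : psi C g' n j k 0 = conjc (psi C g n j k 0).
Proof.
elim: n j k => [|n IH] j k; first by rewrite !psi0E; case: ifP; rewrite ?conjc0.
by case: (ord2P k) => ->; rewrite ?psiS_up ?psiS_down !IH conjcD !conjcM !C_real.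
Qed.

Lemma prob_conj j n : prob C g' j n = prob C g j n.
Proof. by rewrite !probE !psi_conj !sqmodJ. Qed.

End RealCoin.

Section Mirror.

Variables (C : coin) (g g' : cstate).
Hypotheses (C_diag : C Down Down = C Up Up) (C_antidiag : C Down Up = - C Up Down).
Hypotheses (g'_up : g' Up 0 = g Down 0) (g'_down : g' Down 0 = - g Up 0).

Lemma psi_mirror n j : psi C g' n j Up 0 = psi C g n (- j) Down 0 /\
  psi C g' n j Down 0 = - psi C g n (- j) Up 0.
Proof.
elim: n j => [|n IH] j.
  by rewrite !psi0E oppr_eq0; case: ifP; rewrite ?oppr0.
have [up_l down_l] := IH (j - 1); have [up_r down_r] := IH (j + 1).
rewrite !psiS_up !psiS_down up_l down_l up_r down_r opprB opprD [1 - j]addrC C_diag C_antidiag.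
by split; ring.
Qed.

Lemma prob_mirror j n : prob C g' j n = prob C g (- j) n.
Proof. by have [up_j down_j] := psi_mirror n j; rewrite !probE up_j down_j sqmodN addrC. Qed.

End Mirror.

Lemma Ctheta_up_up th : Ctheta th Up Up = (cos th)%:C. Proof. by rewrite mxE. Qed.
Lemma Ctheta_down_down th : Ctheta th Down Down = (cos th)%:C. Proof. by rewrite mxE. Qed.
Lemma Ctheta_up_down th : Ctheta th Up Down = (sin th)%:C. Proof. by rewrite mxE. Qed.
Lemma Ctheta_down_up th : Ctheta th Down Up = - (sin th)%:C. Proof. by rewrite mxE /= rmorphN. Qed.

Definition CthetaE := (Ctheta_up_up, Ctheta_up_down, Ctheta_down_up, Ctheta_down_down).

Lemma gamma_star_up : gamma_star Up 0 = (Rinv (sqrt 2))%:C. Proof. by rewrite mxE. Qed.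

Lemma gamma_star_down : gamma_star Down 0 = 'i * (Rinv (sqrt 2))%:C.
Proof. by rewrite mxE /=; simpc. Qed.

(* [i gamma_*] is the mirror image [(g_down, - g_up)] of [gamma_*]. *)
Lemma Ctheta_gamma_star_symmetric th : symmetric_in_distribution (Ctheta th) gamma_star.
Proof.
move=> j n; pose g' : cstate := \col_k ('i * gamma_star k 0).
have global_phase : prob (Ctheta th) g' j n = prob (Ctheta th) gamma_star j n.
  apply: (@gauge_prob _ _ _ _ (fun _ => 'i) (fun _ => - 'i)) => [_|_|k l|k].
  - exact: sqmodi.
  - by rewrite sqmodN sqmodi.
  - by rewrite mulrC mulrA mulNr mulii opprK mul1r.
  - by rewrite mxE mulrA mulNr mulii opprK mul1r.
rewrite -global_phase (@prob_mirror _ gamma_star) ?opprK ?CthetaE //.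
- by rewrite mxE gamma_star_up gamma_star_down.
- by rewrite mxE gamma_star_up gamma_star_down mulrA mulii mulN1r.
Qed.

Section SmallTimes.

Variables (th : R) (g : cstate).

Let c := cos th.
Let s := sin th.
Let x1 := complex.Re (g Up 0).
Let x2 := complex.Im (g Up 0).
Let y1 := complex.Re (g Down 0).
Let y2 := complex.Im (g Down 0).

Let u1r := c * x1 + s * y1.
Let u1i := c * x2 + s * y2.
Let u2r := - s * x1 + c * y1.
Let u2i := - s * x2 + c * y2.

Local Ltac real_parts := rewrite ?CthetaE ?sqmod0 ?addr0 !sqmodE ?mulNr
  ?(ReD, ImD, ReN, ImN, Re_realM, Im_realM) -/x1 -/x2 -/y1 -/y2 -/c -/s.

Lemma prob_Ctheta_1_1 : prob (Ctheta th) g 1 1 = u1r ^+ 2 + u1i ^+ 2.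
Proof. by rewrite probE psi_1_1_up psi_1_1_down; real_parts; rewrite /u1r /u1i; ring. Qed.

Lemma prob_Ctheta_N1_1 : prob (Ctheta th) g (-1) 1 = u2r ^+ 2 + u2i ^+ 2.
Proof. by rewrite probE psi_1_N1_up psi_1_N1_down; real_parts; rewrite /u2r /u2i; ring. Qed.

Lemma prob_Ctheta_2_2 : prob (Ctheta th) g 2 2 = (c * u1r) ^+ 2 + (c * u1i) ^+ 2.
Proof. by rewrite probE psi_2_2_up psi_2_2_down; real_parts; rewrite /u1r /u1i; ring. Qed.

Lemma prob_Ctheta_1_3 : prob (Ctheta th) g 1 3 =
  (c * s * u2r - s * s * u1r) ^+ 2 + (c * s * u2i - s * s * u1i) ^+ 2
  + (s * c * u1r) ^+ 2 + (s * c * u1i) ^+ 2.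
Proof.
by rewrite probE psi_3_1_up psi_3_1_down; real_parts; rewrite /u1r /u1i /u2r /u2i; ring.
Qed.

Lemma prob_Ctheta_N1_3 : prob (Ctheta th) g (-1) 3 =
  (s * c * u2r) ^+ 2 + (s * c * u2i) ^+ 2
  + (s * s * u2r + c * s * u1r) ^+ 2 + (s * s * u2i + c * s * u1i) ^+ 2.
Proof.
by rewrite probE psi_3_N1_up psi_3_N1_down; real_parts; rewrite /u1r /u1i /u2r /u2i; ring.
Qed.

End SmallTimes.

Lemma prob_Ctheta_gamma_star_2_2 th :
  prob (Ctheta th) gamma_star 2 2 = cos th ^+ 2 * Rinv (sqrt 2) ^+ 2.
Proof.
rewrite prob_Ctheta_2_2 !mxE /=.
transitivity (cos th ^+ 2 * Rinv (sqrt 2) ^+ 2 * (cos th ^+ 2 + sin th ^+ 2)); first by ring.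
by rewrite cos2_sin2 mulr1.
Qed.

Lemma Ctheta_gamma_star_inj th th' : (0 <= th <= PI / 2)%R -> (0 <= th' <= PI / 2)%R ->
  dist_equiv (Ctheta th) gamma_star (Ctheta th') gamma_star -> th = th'.
Proof.
move=> th_range th'_range equiv.
have cos_ge0 x : (0 <= x <= PI / 2)%R -> 0 <= cos x.
  by case=> x_ge0 x_le; apply/RleP/cos_ge_0; have := PI_RGT_0; lra.
have inv_sqrt2_neq0 : Rinv (sqrt 2) ^+ 2 != 0.
  by rewrite expf_eq0 /=; apply/eqP/Rinv_neq_0_compat/sqrt2_neq_0.
have := equiv 2 2; rewrite !prob_Ctheta_gamma_star_2_2 => /(mulIf inv_sqrt2_neq0) /eqP.
rewrite eqrXn2 ?cos_ge0 // => /eqP cos_eq.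
by apply: cos_inj => //; move: th_range th'_range; have := PI_RGT_0; lra.
Qed.

(** * Normal form of unitary coins *)

Lemma unitary_rows (C : coin) : unitary C ->
  [/\ sqmod (C Up Up) + sqmod (C Up Down) = 1, sqmod (C Down Up) + sqmod (C Down Down) = 1
    & conjc (C Up Up) * C Down Up + conjc (C Up Down) * C Down Down = 0].
Proof.
move=> CU.
have entry k l : C k Up * conjc (C l Up) + C k Down * conjc (C l Down) = (1%:M : coin) k l.
  by rewrite -CU mulmx2E /adjoint !mxE.
have row_unit k : sqmod (C k Up) + sqmod (C k Down) = 1.
  by have := entry k k; rewrite !mulcJ -rmorphD mxE eqxx /= => /complexI.
split; rewrite ?row_unit //.
by have := entry Down Up; rewrite mxE /= (mulrC (conjc (C Up Up))) (mulrC (conjc (C Up Down))).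
Qed.

Lemma orthogonal_complement (a b : R) (X Y : Cx) :
  a ^+ 2 + b ^+ 2 = 1 -> a%:C * X + b%:C * Y = 0 -> sqmod X + sqmod Y = 1 ->
  exists2 mu, sqmod mu = 1 & X = - b%:C * mu /\ Y = a%:C * mu.
Proof.
move=> ab1 orth XY1; pose mu := a%:C * Y - b%:C * X.
have abC1 : a%:C ^+ 2 + b%:C ^+ 2 = 1 by rewrite -!rmorphXn -rmorphD ab1.
have X_mu : X = - b%:C * mu.
  apply/eqP; rewrite -subr_eq0; apply/eqP.
  transitivity ((1 - (a%:C ^+ 2 + b%:C ^+ 2)) * X + a%:C * (a%:C * X + b%:C * Y)).
    by rewrite /mu; ring.
  by rewrite abC1 orth subrr mul0r mulr0 addr0.
have Y_mu : Y = a%:C * mu.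
  apply/eqP; rewrite -subr_eq0; apply/eqP.
  transitivity ((1 - (a%:C ^+ 2 + b%:C ^+ 2)) * Y + b%:C * (a%:C * X + b%:C * Y)).
    by rewrite /mu; ring.
  by rewrite abC1 orth subrr mul0r mulr0 addr0.
exists mu => //.
by move: XY1; rewrite X_mu Y_mu !sqmodM sqmodN !sqmodC -mulrDl addrC ab1 mul1r.
Qed.

Lemma unitary_gauge_Ctheta (C : coin) : unitary C -> exists th (d1 d2 : 'I_2 -> Cx),
  [/\ (0 <= th <= PI / 2)%R, forall k, sqmod (d1 k) = 1, forall k, sqmod (d2 k) = 1
    & forall k l, Ctheta th k l = d1 k * C k l * d2 l].
Proof.
case/unitary_rows => row_up row_down orth.
set a := C Up Up in row_up orth *; set b := C Up Down in row_up orth *.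
set e := C Down Up in row_down orth *; set f := C Down Down in row_down orth *.
have [th [th_range cos_th sin_th]] : exists th, [/\ (0 <= th <= PI / 2)%R,
    cos th = sqrt (sqmod a) & sin th = sqrt (sqmod b)].
  by apply: exists_angle_cos_sin; rewrite ?Rsqrt_ge0 // !sqrt_expr2 ?sqmod_ge0.
have a_polar : a = (cos th)%:C * phase a by rewrite cos_th -polar_phase.
have b_polar : b = (sin th)%:C * phase b by rewrite sin_th -polar_phase.
set pa := phase a in a_polar b_polar *; set pb := phase b in a_polar b_polar *.
have pa1 : sqmod pa = 1 by apply: sqmod_phase.
have pb1 : sqmod pb = 1 by apply: sqmod_phase.
have papb1 : sqmod (pa * conjc pb) = 1 by rewrite sqmodM sqmodJ pa1 pb1 mulr1.
have [mu mu1 [e_mu f_mu]] : exists2 mu, sqmod mu = 1 &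
    e = - (sin th)%:C * mu /\ f * (pa * conjc pb) = (cos th)%:C * mu.
  apply: orthogonal_complement; first exact: cos2_sin2.
    transitivity (pa * (conjc a * e + conjc b * f) + (1 - pa * conjc pa) * ((cos th)%:C * e)).
      by rewrite a_polar b_polar !conjcM !conjc_real; ring.
    by rewrite orth mulcJ pa1 subrr mulr0 mul0r addr0.
  by rewrite sqmodM papb1 mulr1.
exists th, (fun k => if k == Up then conjc pa else conjc mu),
  (fun k => if k == Up then 1 else pa * conjc pb); split => //.
- by move=> k; case: ifP; rewrite sqmodJ.
- by move=> k; case: ifP; rewrite ?sqmod1.
move=> k l; case: (ord2P k) => ->; case: (ord2P l) => ->; rewrite /= -/a -/b -/e -/f CthetaE.
- by rewrite a_polar mulr1 mulrCA mulJc_unimodular ?mulr1.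
- rewrite b_polar; transitivity ((sin th)%:C * (conjc pa * pa) * (conjc pb * pb)).
    by rewrite !mulJc_unimodular ?mulr1.
  by ring.
- by rewrite e_mu mulr1 mulrCA mulJc_unimodular ?mulr1.
- by rewrite -mulrA f_mu mulrCA mulJc_unimodular ?mulr1.
Qed.

(** * Symmetric coin states *)

Lemma rotation_system_solution (F : numDomainType) (c s A B : F) : c ^+ 2 + s ^+ 2 = 1 ->
  (c ^+ 2 - s ^+ 2) * A + 4 * c * s * B = 0 ->
  s ^+ 3 * c * (- c * s * A + (c ^+ 2 - s ^+ 2) * B) = 0 ->
  A = 0 /\ (c != 0 -> s != 0 -> B = 0).
Proof.
move=> cs1 eqA eqB.
have generic_case : c != 0 -> s != 0 -> A = 0 /\ B = 0.
  move=> c_neq0 s_neq0.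
  have {}eqB : - c * s * A + (c ^+ 2 - s ^+ 2) * B = 0.
    by move/eqP: eqB; rewrite !mulf_eq0 (negbTE c_neq0) (negbTE s_neq0) /= => /eqP.
  have A0 : A = 0.
    transitivity ((c ^+ 2 + s ^+ 2) ^+ 2 * A); first by rewrite cs1 expr1n mul1r.
    transitivity ((c ^+ 2 - s ^+ 2) * ((c ^+ 2 - s ^+ 2) * A + 4 * c * s * B)
                  - 4 * c * s * (- c * s * A + (c ^+ 2 - s ^+ 2) * B)); first by ring.
    by rewrite eqA eqB !mulr0 subrr.
  split=> //; move/eqP: eqA.
  by rewrite A0 mulr0 add0r !mulf_eq0 (negbTE c_neq0) (negbTE s_neq0) orbF pnatr_eq0 => /eqP.
split; last by move=> c_neq0 s_neq0; case: (generic_case c_neq0 s_neq0).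
have [c0|c_neq0] := eqVneq c 0.
  have s2 : s ^+ 2 = 1 by move: cs1; rewrite c0 expr0n /= add0r.
  transitivity (- ((c ^+ 2 - s ^+ 2) * A + 4 * c * s * B)); first by rewrite c0 s2; ring.
  by rewrite eqA oppr0.
have [s0|s_neq0] := eqVneq s 0.
  have c2 : c ^+ 2 = 1 by move: cs1; rewrite s0 expr0n /= addr0.
  transitivity ((c ^+ 2 - s ^+ 2) * A + 4 * c * s * B); first by rewrite s0 c2; ring.
  exact: eqA.
by case: (generic_case c_neq0 s_neq0).
Qed.

(* The symmetry of the walk at the sites [1] and [-1] after one and after three steps, in terms
   of [A = |x|^2 - |y|^2] and [B = Re (x conj y)] for the coin state [(x1 + i x2, y1 + i y2)]. *)
Lemma small_time_symmetry_equations (F : numDomainType) (c s x1 x2 y1 y2 : F) :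
  c ^+ 2 + s ^+ 2 = 1 ->
  let u1r := c * x1 + s * y1 in let u1i := c * x2 + s * y2 in
  let u2r := - s * x1 + c * y1 in let u2i := - s * x2 + c * y2 in
  u1r ^+ 2 + u1i ^+ 2 = u2r ^+ 2 + u2i ^+ 2 ->
  (c * s * u2r - s * s * u1r) ^+ 2 + (c * s * u2i - s * s * u1i) ^+ 2
    + (s * c * u1r) ^+ 2 + (s * c * u1i) ^+ 2 =
  (s * c * u2r) ^+ 2 + (s * c * u2i) ^+ 2
    + (s * s * u2r + c * s * u1r) ^+ 2 + (s * s * u2i + c * s * u1i) ^+ 2 ->
  x1 ^+ 2 + x2 ^+ 2 - y1 ^+ 2 - y2 ^+ 2 = 0 /\ (c != 0 -> s != 0 -> x1 * y1 + x2 * y2 = 0).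
Proof.
move=> cs1 u1r u1i u2r u2i sym1 sym3.
apply: rotation_system_solution cs1 _ _.
  transitivity (u1r ^+ 2 + u1i ^+ 2 - (u2r ^+ 2 + u2i ^+ 2)).
    by rewrite /u1r /u1i /u2r /u2i; ring.
  by rewrite sym1 subrr.
apply/eqP; rewrite -(mulrI_eq0 _ (mulfI (_ : 4 != 0))) ?pnatr_eq0 //; apply/eqP.
transitivity (s ^+ 4 * (u1r ^+ 2 + u1i ^+ 2 - (u2r ^+ 2 + u2i ^+ 2)) -
  ((c * s * u2r - s * s * u1r) ^+ 2 + (c * s * u2i - s * s * u1i) ^+ 2
    + (s * c * u1r) ^+ 2 + (s * c * u1i) ^+ 2 -
  ((s * c * u2r) ^+ 2 + (s * c * u2i) ^+ 2
    + (s * s * u2r + c * s * u1r) ^+ 2 + (s * s * u2i + c * s * u1i) ^+ 2))).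
  by rewrite /u1r /u1i /u2r /u2i; ring.
by rewrite sym1 sym3 !subrr mulr0 subrr.
Qed.

Lemma Ctheta_symmetric_state th (g : cstate) : symmetric_in_distribution (Ctheta th) g ->
  sqmod (g Up 0) = sqmod (g Down 0) /\
  (cos th != 0 -> sin th != 0 -> g Down 0 = 'i * g Up 0 \/ g Down 0 = - 'i * g Up 0).
Proof.
move=> sym; have := sym 1 1; have := sym 1 3.
rewrite prob_Ctheta_1_1 prob_Ctheta_N1_1 prob_Ctheta_1_3 prob_Ctheta_N1_3 => sym3 sym1.
have [A0 B0] := small_time_symmetry_equations (cos2_sin2 th) sym1 sym3.
rewrite [g Up 0]Complex_ReIm [g Down 0]Complex_ReIm !sqmodE mulNr !mulic /=.
move: A0 B0; set x1 := complex.Re _; set x2 := complex.Im _.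
set y1 := complex.Re _; set y2 := complex.Im _ => A0 B0.
split; first by apply/eqP; rewrite -subr_eq0 opprD addrA A0.
move=> c_neq0 s_neq0; have {}B0 := B0 c_neq0 s_neq0.
(* [A ^+ 2 + 4 B ^+ 2 = |y - i x|^2 |y + i x|^2] *)
have : ((y1 + x2) ^+ 2 + (y2 - x1) ^+ 2) * ((y1 - x2) ^+ 2 + (y2 + x1) ^+ 2) = 0.
  transitivity ((x1 ^+ 2 + x2 ^+ 2 - y1 ^+ 2 - y2 ^+ 2) ^+ 2 + 4 * (x1 * y1 + x2 * y2) ^+ 2).
    by ring.
  by rewrite A0 B0 expr0n /= mulr0 addr0.
move/eqP; rewrite mulf_eq0 => /orP[] /eqP /sqr_add_sqr_eq0 [/eqP e1 /eqP e2]; [left|right].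
- by move: e1 e2; rewrite addr_eq0 subr_eq0 => /eqP -> /eqP ->.
- by move: e1 e2; rewrite subr_eq0 addr_eq0 => /eqP -> /eqP ->; simpc.
Qed.

(* The gauge [d2 = sqrt 2 (x, - i y)] maps [gamma_*] to [(x, y)]; [d1], the conjugate of [d2]
   with its entries swapped when [Ctheta th] is antidiagonal, satisfies [d1 k * d2 l = 1]
   wherever [Ctheta th k l != 0], because [y = i x] makes [d2] constant when no entry vanishes. *)
Lemma Ctheta_gamma_star_equiv th (g : cstate) :
  (cos th != 0 -> sin th != 0 -> g Down 0 = 'i * g Up 0) ->
  sqmod (g Up 0) + sqmod (g Up 0) = 1 -> sqmod (g Down 0) + sqmod (g Down 0) = 1 ->
  dist_equiv (Ctheta th) gamma_star (Ctheta th) g.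
Proof.
move=> y_ix x_half y_half j n.
pose d2 k := if k == Up then (sqrt 2)%:C * g Up 0 else - 'i * ((sqrt 2)%:C * g Down 0).
have d2_unimodular k : sqmod (d2 k) = 1.
  by rewrite /d2; case: ifP => _; rewrite ?(sqmodM (- 'i)) sqmod_sqrt2M ?sqmodN ?sqmodi ?mul1r.
pose swap k := if cos th == 0 then (if k == Up then Down else Up) else k.
pose d1 k := conjc (d2 (swap k)).
have d1_unimodular k : sqmod (d1 k) = 1 by rewrite sqmodJ.
have d2_const : cos th != 0 -> sin th != 0 -> d2 Down = d2 Up.
  by move=> c_neq0 s_neq0; rewrite /d2 /= y_ix // mulrCA (mulrA (- 'i)) mulNr mulii opprK mul1r.
have d1d2 k l : Ctheta th k l != 0 -> d1 k * d2 l = 1.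
  move=> Ckl_neq0; rewrite /d1 (_ : d2 l = d2 (swap k)) ?mulJc_unimodular //.
  move: Ckl_neq0; rewrite /swap; have [c0|c_neq0] := eqVneq (cos th) 0;
    case: (ord2P k) => ->; case: (ord2P l) => ->;
    rewrite CthetaE ?oppr_eq0 real_complex_eq0 ?c0 ?eqxx //= => s_neq0.
    exact: d2_const.
  exact/esym/d2_const.
apply: (gauge_prob d1_unimodular d2_unimodular) => [k l|k].
- have [->|Ckl_neq0] := eqVneq (Ctheta th k l) 0; first by rewrite mulr0 mul0r.
  by rewrite mulrAC d1d2 ?mul1r.
- case: (ord2P k) => ->; rewrite /d2 /= ?gamma_star_up ?gamma_star_down.
    by rewrite mulrAC sqrt2_invC mul1r.
  transitivity (- ('i * 'i) * ((sqrt 2)%:C * (Rinv (sqrt 2))%:C) * g Down 0); first by ring.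
  by rewrite sqrt2_invC mulii opprK !mul1r.
Qed.

Lemma Ctheta_symmetric_equiv_gamma_star th (g : cstate) : unit_vec g ->
  symmetric_in_distribution (Ctheta th) g -> dist_equiv (Ctheta th) gamma_star (Ctheta th) g.
Proof.
move=> g_unit sym; have [xy_eq y_ix] := Ctheta_symmetric_state sym.
have x_half : sqmod (g Up 0) + sqmod (g Up 0) = 1 by rewrite {2}xy_eq.
have y_half : sqmod (g Down 0) + sqmod (g Down 0) = 1 by rewrite -{1}xy_eq.
have [c0|c_neq0] := eqVneq (cos th) 0.
  by apply: Ctheta_gamma_star_equiv => //; rewrite c0 eqxx.
have [s0|s_neq0] := eqVneq (sin th) 0.
  by apply: Ctheta_gamma_star_equiv => // _; rewrite s0 eqxx.
case: (y_ix c_neq0 s_neq0) => y_eq; first exact: Ctheta_gamma_star_equiv.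
(* If [y = - i x], the conjugate state has [y = i x], and as [Ctheta] is real it yields the same
   distribution. *)
pose g' : cstate := \col_k conjc (g k 0).
move=> j n; rewrite -(@prob_conj _ g g') => [|k l|k]; last by rewrite mxE.
- apply: Ctheta_gamma_star_equiv; rewrite !mxE ?sqmodJ // => _ _.
  by rewrite y_eq conjcM; congr (_ * _); simpc.
- by case: (ord2P k) => ->; case: (ord2P l) => ->; rewrite CthetaE ?conjcN conjc_real.
Qed.

Lemma symmetric_coin_setup_equiv (C : coin) (g : cstate) : unitary C -> unit_vec g ->
  symmetric_in_distribution C g ->
  exists th, (0 <= th <= PI / 2)%R /\ dist_equiv C g (Ctheta th) gamma_star.
Proof.
case/unitary_gauge_Ctheta => th [d1 [d2 [th_range d1_unimodular d2_unimodular C_gauge]]].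
move=> g_unit sym; pose g' : cstate := \col_k (conjc (d2 k) * g k 0).
have g_gauge k : d2 k * g' k 0 = g k 0 by rewrite mxE mulrA mulcJ d2_unimodular mul1r.
have same_prob := gauge_prob d1_unimodular d2_unimodular C_gauge g_gauge.
have g'_unit : unit_vec g'.
  by rewrite /unit_vec !mxE !sqmodM !sqmodJ !d2_unimodular !mul1r; apply: g_unit.
have sym' : symmetric_in_distribution (Ctheta th) g' by move=> j n; rewrite !same_prob.
exists th; split=> // j n.
by rewrite -same_prob (Ctheta_symmetric_equiv_gamma_star g'_unit sym').
Qed.

Theorem theorem2 :
  (forall th : R, (0 <= th <= PI / 2)%R ->
     symmetric_in_distribution (Ctheta th) gamma_star)
  /\ (forall (C : coin) (g : cstate), unitary C -> unit_vec g ->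
        symmetric_in_distribution C g ->
        exists th : R, (0 <= th <= PI / 2)%R /\ dist_equiv C g (Ctheta th) gamma_star)
  /\ (forall th th' : R, (0 <= th <= PI / 2)%R -> (0 <= th' <= PI / 2)%R ->
        dist_equiv (Ctheta th) gamma_star (Ctheta th') gamma_star -> th = th').
Proof.
split; first by move=> th _; apply: Ctheta_gamma_star_symmetric.
split; first exact: symmetric_coin_setup_equiv.
exact: Ctheta_gamma_star_inj.
Qed.
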